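(* Let $(x_n)_n$ be a block sequence in $J$ which is equivalent to the unit vector basis $(e_n)$ of $J$. Then the closed linear span $[x_n]$ is complemented in $J$.
   Context: The James space $J$ is the space of real sequences $x=(x(n))_{n\in\mathbb N}$ with $\|x\|=\sup\big(\sum_{i=1}^m|\sum_{k\in I_i}x(k)|^2\big)^{1/2}<\infty$, the supremum taken over all $m$ and all pairwise disjoint finite intervals $I_1,\dots,I_m$ of $\mathbb N$. The unit vectors $(e_n)$ form a basis of $J$; a block sequence is a sequence of nonzero finitely supported vectors with $\max\operatorname{supp}x_n<\min\operatorname{supp}x_{n+1}$. *)

From HB Require Import structures.
From mathcomp Require Import all_boot all_order all_algebra.
From mathcomp Require Import classical_sets reals.
Set Implicit Arguments. Unset Strict Implicit. Unset Printing Implicit Defensive.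
Import Order.TTheory GRing.Theory Num.Theory.
Local Open Scope ring_scope.
Local Open Scope classical_set_scope.

Definition rseq (R : realType) := nat -> R.

Definition in_interval (I : nat * nat) (k : nat) : Prop := (I.1 <= k <= I.2)%N.

Definition pairwise_disjoint (Is : seq (nat * nat)) : Prop :=
  forall i j, (i < j < size Is)%N ->
    forall k, ~ (in_interval (nth (0,0)%N Is i) k /\ in_interval (nth (0,0)%N Is j) k).

Definition interval_sum (R : realType) (x : rseq R) (I : nat * nat) : R :=
  \sum_(I.1 <= k < I.2.+1) x k.

Definition jsq (R : realType) (x : rseq R) (Is : seq (nat * nat)) : R :=
  \sum_(I <- Is) (interval_sum x I) ^+ 2.

Definition jsq_set (R : realType) (x : rseq R) : set R :=
  [set r | exists Is, pairwise_disjoint Is /\ r = jsq x Is].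

Definition in_J (R : realType) (x : rseq R) : Prop :=
  exists C : R, forall Is, pairwise_disjoint Is -> jsq x Is <= C.

(* the James norm ||x|| (meaningful for x in J) *)
Definition jnorm (R : realType) (x : rseq R) : R := Num.sqrt (sup (jsq_set x)).

Definition unit_vec (R : realType) (n : nat) : rseq R :=
  fun k => if k == n then 1 else 0.

Definition lincomb (R : realType) (x : nat -> rseq R) (a : nat -> R) (N : nat) : rseq R :=
  fun k => \sum_(n < N) a n * x n k.

Definition finitely_supported (R : realType) (f : rseq R) : Prop :=
  exists N, forall k, (N <= k)%N -> f k = 0.

Definition block_sequence (R : realType) (x : nat -> rseq R) : Prop :=
  (forall n, finitely_supported (x n)) /\
  (forall n, exists k, x n k != 0) /\
  (forall n k l, x n k != 0 -> x n.+1 l != 0 -> (k < l)%N).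

Definition equivalent_seqs (R : realType) (x y : nat -> rseq R) : Prop :=
  exists c C : R, 0 < c /\ 0 < C /\
    forall (a : nat -> R) (N : nat),
      c * jnorm (lincomb y a N) <= jnorm (lincomb x a N) /\
      jnorm (lincomb x a N) <= C * jnorm (lincomb y a N).

Definition closed_span (R : realType) (x : nat -> rseq R) : set (rseq R) :=
  [set y | in_J y /\ forall eps : R, 0 < eps ->
     exists (a : nat -> R) (N : nat), jnorm (fun k => y k - lincomb x a N k) < eps].

Definition complemented_in_J (R : realType) (X : set (rseq R)) : Prop :=
  exists P : rseq R -> rseq R,
    (forall y, in_J y -> in_J (P y)) /\
    (forall (al be : R) y z, in_J y -> in_J z ->
        P (fun k => al * y k + be * z k) = (fun k => al * P y k + be * P z k)) /\
    (exists M : R, forall y, in_J y -> jnorm (P y) <= M * jnorm y) /\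
    (forall y, in_J y -> X (P y)) /\
    (forall y, X y -> P y = y).

From HB Require Import structures.
From mathcomp Require Import all_boot all_order all_algebra.
From mathcomp Require Import boolp classical_sets reals.
From mathcomp Require Import zify ring lra.
Set Implicit Arguments. Unset Strict Implicit. Unset Printing Implicit Defensive.
Import Order.TTheory GRing.Theory Num.Theory.
Local Open Scope ring_scope.
Local Open Scope classical_set_scope.

(* Let [x_n] live on the block [[q n, q (n+1))], with total [t_n] (the sum of its
   entries) and [||x_n|| <= C].  Writing [sum b_n x_n] as the sequence carrying
   [b_n t_n] at the start of the blocks plus a remainder with zero sum on every
   block (on which the J-norm is essentially additive over blocks) gives
     [||sum b_n x_n||^2 <= 2 ||(b_n t_n)_n||^2 + 16 C^2 sum b_n^2].
   Tested on indicator coefficients, the lower estimate of the equivalence with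
   the unit vector basis then forces [|t_n| >= c/2] for all but finitely many [n].
   For those [n] the coefficient of [x_n] is recovered by the block sum of [y]
   divided by [t_n]; for the finitely many others by a partial block sum
   [sum_{q n <= k <= j n} y k] divided by the same sum for [x_n], with [j n]
   chosen to make it nonzero.  The block sums of [y] form a sequence of J-norm at
   most [||y||], so the same estimate shows that [P y = sum_n f_n(y) x_n] is
   bounded; it fixes finite combinations of the [x_n], hence is a projection onto
   their closed span. *)

Definition disjoint_itv (I J : nat * nat) : bool :=
  [|| (I.2 < J.1)%N, (J.2 < I.1)%N, (I.2 < I.1)%N | (J.2 < J.1)%N].

Lemma disjoint_itvP I J :
  reflect (forall k, ~ (in_interval I k /\ in_interval J k)) (disjoint_itv I J).
Proof.
rewrite /disjoint_itv /in_interval; apply: (iffP idP).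
  by move=> h k [/andP [h1 h2] /andP [h3 h4]]; case/or4P: h; lia.
move=> h; apply/negPn/negP => hn.
apply: (h (maxn I.1 J.1)); rewrite !negb_or in hn; move: hn.
case: I J h => [a b] [c d] /= _; rewrite -!leqNgt => /and4P [h1 h2 h3 h4].
by split; apply/andP; split; lia.
Qed.

Lemma pairwise_disjointP Is : pairwise_disjoint Is <-> pairwise disjoint_itv Is.
Proof.
split.
  move=> h; apply/(pairwiseP (0,0)%N) => i j; rewrite !inE => hi hj hij.
  by apply/disjoint_itvP; apply: h; rewrite hij hj.
move=> /(pairwiseP (0,0)%N) h i j /andP [hij hj] k.
by apply/disjoint_itvP; apply: h => //; rewrite inE; lia.
Qed.

Lemma pairwise_disjoint_nil : pairwise_disjoint [::].
Proof. by apply/pairwise_disjointP. Qed.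

Lemma pairwise_disjoint1 I : pairwise_disjoint [:: I].
Proof. by apply/pairwise_disjointP. Qed.

Lemma pairwise_disjoint_map (f : nat * nat -> nat * nat) Is :
  {homo f : I J / disjoint_itv I J} ->
  pairwise_disjoint Is -> pairwise_disjoint (map f Is).
Proof.
move=> hf /pairwise_disjointP h; apply/pairwise_disjointP.
by rewrite pairwise_map; apply: sub_pairwise h.
Qed.

Definition in_itv (I : nat * nat) (k : nat) : bool := (I.1 <= k <= I.2)%N.

Lemma count_in_itv_le1 Is k :
  pairwise disjoint_itv Is -> (count (in_itv^~ k) Is <= 1)%N.
Proof.
elim: Is => //= I Is IH /andP [hall hp].
case: (boolP (in_itv I k)) => hI /=; last exact: IH.
suff -> : count (in_itv^~ k) Is = 0%N by [].
apply/eqP; rewrite -leqn0 leqNgt -has_count; apply/hasP => [[J hJ hJk]].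
by have /disjoint_itvP/(_ k) := allP hall J hJ; apply.
Qed.

Section JamesSpace.
Variable R : realType.
Implicit Types (u v y : rseq R) (Is : seq (nat * nat)).

Lemma interval_sum_ext u v I : (forall k, u k = v k) ->
  interval_sum u I = interval_sum v I.
Proof. by move=> h; apply: eq_bigr => k _; apply: h. Qed.

Lemma interval_sumD u v al be I :
  interval_sum (fun k => al * u k + be * v k) I =
  al * interval_sum u I + be * interval_sum v I.
Proof. by rewrite /interval_sum big_split /= -!mulr_sumr. Qed.

Lemma interval_sum_seq1 u k : interval_sum u (k, k) = u k.
Proof. by rewrite /interval_sum big_nat1. Qed.

Lemma interval_sum_sumE v I N : (I.2 < N)%N ->
  interval_sum v I = \sum_(0 <= k < N) (if in_itv I k then v k else 0).
Proof.
case: I => a b /= hbN; rewrite /interval_sum /in_itv /=.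
case: (leqP a b.+1) => hab; last first.
  rewrite big_geq; last lia.
  by rewrite big1_seq // => k _; case: ifP => //; lia.
rewrite [RHS](@big_cat_nat _ _ _ a) /=; [|lia|lia].
rewrite [X in _ = _ + X](@big_cat_nat _ _ _ b.+1) //=.
rewrite [X in _ = X + _]big1_seq ?add0r; last first.
  by move=> k; rewrite mem_index_iota => hk; case: ifP => //; lia.
rewrite [X in _ = _ + X]big1_seq ?addr0; last first.
  by move=> k; rewrite mem_index_iota => hk; case: ifP => //; lia.
by apply: eq_big_seq => k; rewrite mem_index_iota => hk; case: ifP => //; lia.
Qed.

Lemma jsq_ext u v Is : (forall k, u k = v k) -> jsq u Is = jsq v Is.
Proof. by move=> h; apply: eq_bigr => I _; rewrite (interval_sum_ext _ h). Qed.

Lemma jsq_seq1 u I : jsq u [:: I] = interval_sum u I ^+ 2.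
Proof. by rewrite /jsq big_seq1. Qed.

Lemma jsq_ge0 v Is : 0 <= jsq v Is.
Proof. by apply: sumr_ge0 => I _; apply: sqr_ge0. Qed.

Lemma jsq_scale v c Is : jsq (fun k => c * v k) Is = c ^+ 2 * jsq v Is.
Proof.
rewrite /jsq mulr_sumr; apply: eq_bigr => I _.
by rewrite /interval_sum -mulr_sumr exprMn.
Qed.

Lemma jsq_add u v Is :
  jsq (fun k => u k + v k) Is <= 2 * jsq u Is + 2 * jsq v Is.
Proof.
rewrite /jsq !mulr_sumr -big_split /=; apply: ler_sum => I _.
rewrite /interval_sum big_split /=.
set p := \sum_(_ <= _ < _) u _; set q := \sum_(_ <= _ < _) v _.
have := sqr_ge0 (p - q); lra.
Qed.

Lemma jsq_le_l1 v K Is : (forall k, (K <= k)%N -> v k = 0) ->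
  pairwise_disjoint Is -> jsq v Is <= (\sum_(0 <= k < K) `|v k|) ^+ 2.
Proof.
move=> hv /pairwise_disjointP hIs.
have jsq_le_abs : jsq v Is <= (\sum_(I <- Is) `|interval_sum v I|) ^+ 2.
  rewrite /jsq; elim: Is {hIs} => [|I Is IH]; first by rewrite !big_nil expr0n.
  rewrite !big_cons; apply: le_trans (lerD (lexx _) IH) _.
  rewrite -[interval_sum v I ^+ 2]real_normK ?num_real // sqrrD -addrA lerD2l.
  by rewrite lerDr mulrn_wge0 // mulr_ge0 ?sumr_ge0.
apply: le_trans jsq_le_abs _; rewrite ler_sqr ?nnegrE ?sumr_ge0 //.
pose N := maxn K (\max_(I <- Is) I.2).+1.
apply: (@le_trans _ _
    (\sum_(I <- Is) \sum_(0 <= k < N) (if in_itv I k then `|v k| else 0))).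
  rewrite big_seq [X in _ <= X]big_seq; apply: ler_sum => I hI.
  rewrite (interval_sum_sumE v (N:=N)); last first.
    rewrite leq_max ltnS; apply/orP; right.
    exact: (leq_bigmax_seq (F := fun I : nat * nat => I.2)).
  apply: le_trans (ler_norm_sum _ _ _) _; apply: ler_sum => k _.
  by case: ifP; rewrite ?normr0.
rewrite exchange_big /= (@big_cat_nat _ _ _ K) ?leq_maxl //=.
rewrite [X in _ + X]big_nat [X in _ + X]big1 ?addr0; last first.
  move=> k /andP [hk _]; apply: big1 => I _.
  by case: ifP => // _; rewrite hv ?normr0.
apply: ler_sum_nat => k _; rewrite -big_mkcond /= big_const_seq iter_addr addr0.
rewrite -mulr_natr -[X in _ <= X]mulr1 ler_wpM2l // lern1.
exact: count_in_itv_le1.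
Qed.

Lemma sup_jsq_ge0 v : 0 <= sup (jsq_set v).
Proof.
have jsq_set0 : jsq_set v 0.
  by exists [::]; rewrite /jsq big_nil; split=> //; exact: pairwise_disjoint_nil.
case: (pselect (has_sup (jsq_set v))) => h; last by rewrite sup_out.
exact: sup_upper_bound h _ jsq_set0.
Qed.

Lemma jnorm_ge0 v : 0 <= jnorm v.
Proof. exact: sqrtr_ge0. Qed.

Lemma jnorm_sqr v : jnorm v ^+ 2 = sup (jsq_set v).
Proof. by rewrite sqr_sqrtr // sup_jsq_ge0. Qed.

Lemma jsq_le_jnorm v Is : in_J v -> pairwise_disjoint Is -> jsq v Is <= jnorm v ^+ 2.
Proof.
move=> [C hC] hIs; rewrite jnorm_sqr; apply: sup_upper_bound; last by exists Is.
split; first by exists (jsq v Is), Is.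
by exists C => _ [Js [hJs ->]]; apply: hC.
Qed.

Lemma interval_sum_sqr_le_jnorm v I : in_J v -> interval_sum v I ^+ 2 <= jnorm v ^+ 2.
Proof.
by move=> hv; rewrite -jsq_seq1; apply: (jsq_le_jnorm hv); exact: pairwise_disjoint1.
Qed.

Lemma interval_sum_le_jnorm v I : in_J v -> `|interval_sum v I| <= jnorm v.
Proof.
move=> hv; rewrite -ler_sqr ?nnegrE ?normr_ge0 ?jnorm_ge0 // real_normK ?num_real //.
exact: interval_sum_sqr_le_jnorm.
Qed.

Lemma jnorm_sqr_le v B :
  (forall Is, pairwise_disjoint Is -> jsq v Is <= B) -> jnorm v ^+ 2 <= B.
Proof.
move=> h; rewrite jnorm_sqr; apply: ge_sup; last by move=> _ [Is [hIs ->]]; apply: h.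
by exists 0, [::]; rewrite /jsq big_nil; split=> //; exact: pairwise_disjoint_nil.
Qed.

Lemma jnorm_le v M : 0 <= M ->
  (forall Is, pairwise_disjoint Is -> jsq v Is <= M ^+ 2) -> jnorm v <= M.
Proof. by move=> hM /jnorm_sqr_le h; rewrite -ler_sqr ?nnegrE ?jnorm_ge0. Qed.

Lemma jsq_bound_ge0 v B : (forall Is, pairwise_disjoint Is -> jsq v Is <= B) -> 0 <= B.
Proof. by move=> /(_ _ pairwise_disjoint_nil); rewrite /jsq big_nil. Qed.

Lemma in_J_ext u v : (forall k, u k = v k) -> in_J u -> in_J v.
Proof. by move=> h [B hB]; exists B => Is hIs; rewrite -(jsq_ext _ h); apply: hB. Qed.

Lemma in_J_lin u v al be : in_J u -> in_J v -> in_J (fun k => al * u k + be * v k).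
Proof.
move=> [Cu hu] [Cv hv]; exists (2 * (al ^+ 2 * Cu) + 2 * (be ^+ 2 * Cv)) => Is hIs.
apply: le_trans (jsq_add _ _ _) _; rewrite !jsq_scale.
have := ler_wpM2l (sqr_ge0 al) (hu _ hIs).
have := ler_wpM2l (sqr_ge0 be) (hv _ hIs); lra.
Qed.

Lemma finitely_supported_in_J v : finitely_supported v -> in_J v.
Proof.
by move=> [K hK]; exists ((\sum_(0 <= k < K) `|v k|) ^+ 2) => Is; apply: jsq_le_l1.
Qed.

(** * Block sums *)

Definition block_sum (r : nat -> nat) v : rseq R :=
  fun k => \sum_(r k <= i < r k.+1) v i.

Definition union_blocks (r : nat -> nat) (I : nat * nat) : nat * nat :=
  if (r I.1 < r I.2.+1)%N then (r I.1, (r I.2.+1).-1) else (1, 0)%N.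

Section BlockSum.
Variable r : nat -> nat.
Hypothesis r_mono : {homo r : m n / (m <= n)%N}.

Lemma sum_block_sum v a b : (a <= b)%N ->
  \sum_(a <= k < b) block_sum r v k = \sum_(r a <= i < r b) v i.
Proof.
elim: b => [|b IH] hab.
  have -> : a = 0%N by lia.
  by rewrite !big_geq.
case: (ltngtP a b.+1) => h; [|lia|by rewrite h !big_geq].
rewrite big_nat_recr /= ?IH; [|lia|lia].
by rewrite /block_sum -big_cat_nat //; apply: r_mono; lia.
Qed.

Lemma interval_sum_block_sum v I :
  interval_sum (block_sum r v) I = interval_sum v (union_blocks r I).
Proof.
case: I => a b; rewrite /interval_sum /union_blocks /=.
case: (leqP a b.+1) => hab.
  rewrite sum_block_sum //; case: ifP => h /=; first by rewrite prednK //; lia.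
  by rewrite !big_geq //; lia.
have : (r b.+1 <= r a)%N by apply: r_mono; lia.
by rewrite big_geq; [case: ifP => /=; [lia | rewrite big_geq] | lia].
Qed.

Lemma disjoint_union_blocks I J :
  disjoint_itv I J -> disjoint_itv (union_blocks r I) (union_blocks r J).
Proof.
rewrite /disjoint_itv /union_blocks.
case: ifP => hI; last by rewrite /= !orbT.
case: ifP => hJ; last by rewrite /= !orbT.
case: I J hI hJ => a b [c d] /= hI hJ.
have hab : (a <= b)%N by rewrite leqNgt; apply/negP => /r_mono; lia.
have hcd : (c <= d)%N by rewrite leqNgt; apply/negP => /r_mono; lia.
case/or4P => h; [have := r_mono h | have := r_mono h | lia | lia]; lia.
Qed.

Lemma jsq_block_sum v Is : jsq (block_sum r v) Is = jsq v (map (union_blocks r) Is).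
Proof. by rewrite /jsq big_map; apply: eq_bigr => I _; rewrite interval_sum_block_sum. Qed.

Lemma jsq_block_sum_le v Is : in_J v -> pairwise_disjoint Is ->
  jsq (block_sum r v) Is <= jnorm v ^+ 2.
Proof.
move=> hv hIs; rewrite jsq_block_sum; apply: jsq_le_jnorm => //.
exact: pairwise_disjoint_map disjoint_union_blocks hIs.
Qed.

End BlockSum.

(** * Tails *)

Definition tail (K : nat) v : rseq R := fun k => if (K <= k)%N then v k else 0.

Definition clip_itv (K : nat) (I : nat * nat) : nat * nat := (maxn I.1 K, I.2).

Lemma interval_sum_tail v K I : interval_sum (tail K v) I = interval_sum v (clip_itv K I).
Proof.
case: I => a b; rewrite /interval_sum /clip_itv /tail /=.
case: (leqP K a) => hKa.
  by apply: eq_big_seq => k; rewrite mem_index_iota => hk; rewrite ifT //; lia.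
case: (leqP K b.+1) => hKb; last first.
  rewrite [RHS]big_geq; last lia.
  by apply: big1_seq => k /andP [_]; rewrite mem_index_iota => hk; rewrite ifF //; lia.
rewrite (@big_cat_nat _ _ _ K) /=; [|lia|lia].
rewrite big1_seq ?add0r; last first.
  by move=> k /andP [_]; rewrite mem_index_iota => hk; rewrite ifF //; lia.
by apply: eq_big_seq => k; rewrite mem_index_iota => hk; rewrite ifT //; lia.
Qed.

Lemma jsq_tail v K Is : jsq (tail K v) Is = jsq v (map (clip_itv K) Is).
Proof. by rewrite /jsq big_map; apply: eq_bigr => I _; rewrite interval_sum_tail. Qed.

(* Otherwise one could stack, ever further to the right, disjoint families each
   contributing more than [eps], and the J-sums of [v] would be unbounded. *)
Lemma jsq_tail_small v (eps : R) : in_J v -> 0 < eps ->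
  exists K, forall K', (K <= K')%N -> forall Is, pairwise_disjoint Is ->
    jsq (tail K' v) Is <= eps.
Proof.
move=> [C hC] he; apply: contrapT => /forallNP large_tails.
have large_after B : exists K Is, [/\ (B <= K)%N, pairwise_disjoint Is &
    eps < jsq v (map (clip_itv K) Is)].
  have /existsNP [K /not_implyP [hBK /existsNP [Is /not_implyP [hIs]]]] :=
    large_tails B.
  by rewrite jsq_tail => /negP; rewrite -ltNge => hlt; exists K, Is.
have stack m : exists Is B, [/\ pairwise_disjoint Is,
    all (fun I => (I.2 < B)%N) Is & m%:R * eps <= jsq v Is].
  elim: m => [|m [Is [B [hIs hB hm]]]].
    exists [::], 0%N; split; rewrite ?mul0r ?jsq_ge0 //; exact: pairwise_disjoint_nil.
  have [K [Js [hBK hJs Js_large]]] := large_after B.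
  set Js' := map (clip_itv K) Js.
  exists (Is ++ Js'), (maxn B (\max_(J <- Js') J.2).+1); split.
  - apply/pairwise_disjointP; rewrite pairwise_cat; apply/and3P; split.
    + apply/allrelP => I J hI /mapP [J0 _ ->]; have := allP hB I hI.
      rewrite /disjoint_itv /clip_itv /=; lia.
    + exact/pairwise_disjointP.
    + apply/pairwise_disjointP/pairwise_disjoint_map => // -[a b] [c d].
      rewrite /disjoint_itv /clip_itv /=; case/or4P; lia.
  - rewrite all_cat; apply/andP; split.
      by apply/allP => I hI; have := allP hB I hI; lia.
    apply/allP => J hJ; rewrite leq_max ltnS; apply/orP; right.
    exact: (leq_bigmax_seq (F := fun I : nat * nat => I.2)).
  - rewrite /jsq big_cat /= -natr1 mulrDl mul1r.
    by apply: lerD => //; apply: ltW.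
have := archi_boundP (divr_ge0 (jsq_bound_ge0 hC) (ltW he)).
set m := Num.Def.archi_bound _; rewrite ltr_pdivrMr // => hm.
have [Is [B [hIs _ hmIs]]] := stack m.
by have := hC _ hIs; lra.
Qed.

(** * Partitions of [nat] into blocks *)

Lemma sqr_sum_if_le (P : pred nat) (t : nat -> R) N :
  (forall n m, P n -> P m -> n = m) ->
  (\sum_(n < N) (if P n then t n else 0)) ^+ 2 <=
  \sum_(n < N) (if P n then t n ^+ 2 else 0).
Proof.
move=> hP; case: (pselect (exists n : 'I_N, P n)) => [[n0 hn0]|hno].
  rewrite (bigD1 n0) //= [X in _ <= X](bigD1 n0) //= hn0 !big1 ?addr0 //;
    by move=> i hi; case: ifP => // /(hP _ _)/(_ hn0)/val_inj e; rewrite e eqxx in hi.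
rewrite big1 ?expr0n /=; last by move=> i _; case: ifP => // h; case: hno; exists i.
by apply: sumr_ge0 => i _; case: ifP => // _; apply: sqr_ge0.
Qed.

Definition block_restrict (q : nat -> nat) v (n : nat) : rseq R :=
  fun k => if (q n <= k < q n.+1)%N then v k else 0.

Section Partition.
Variable q : nat -> nat.
Hypothesis q_incr : forall n, (q n < q n.+1)%N.

Lemma q_mono : {homo q : m n / (m <= n)%N}.
Proof. exact: homo_leq leqnn leq_trans (fun n => ltnW (q_incr n)). Qed.

Lemma ltn_q m n : (q m < q n)%N = (m < n)%N.
Proof. by rewrite ltnNge (leq_mono (homo_ltn ltn_trans q_incr)) -ltnNge. Qed.

Lemma leq_self_q n : (n <= q n)%N.
Proof. by elim: n => // n IH; apply: leq_ltn_trans IH (q_incr n). Qed.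

Lemma block_unique n m k :
  (q n <= k < q n.+1)%N -> (q m <= k < q m.+1)%N -> n = m.
Proof.
move=> /andP [h1 h2] /andP [h3 h4]; apply/eqP; rewrite eqn_leq.
by apply/andP; split; rewrite leqNgt; apply/negP => /q_mono; lia.
Qed.

Lemma interval_sum_block v n :
  interval_sum v (q n, (q n.+1).-1) = \sum_(q n <= k < q n.+1) v k.
Proof. by rewrite /interval_sum /= prednK //; have := q_incr n; lia. Qed.

Lemma pairwise_disjoint_blocks N :
  pairwise_disjoint (map (fun n => (q n, (q n.+1).-1)) (iota 0 N)).
Proof.
apply/pairwise_disjointP; rewrite pairwise_map.
have : pairwise ltn (iota 0 N).
  by rewrite -sorted_pairwise ?iota_ltn_sorted //; exact: ltn_trans.
apply: sub_pairwise => n m /= /q_mono; rewrite /disjoint_itv /=; have := q_incr n; lia.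
Qed.

Lemma block_sum_restrict v N k : q 0%N = 0%N ->
  \sum_(n < N) block_restrict q v n k = if (k < q N)%N then v k else 0.
Proof.
move=> q0; elim: N => [|N IH]; first by rewrite big_ord0 q0.
rewrite big_ord_recr /= IH /block_restrict.
have := q_incr N; case: (ltnP k (q N)) => h1 h2; last by rewrite add0r.
by rewrite addr0 ifT //; lia.
Qed.

Lemma interval_sum_restrict_outside v n a b :
  \sum_(q n <= k < q n.+1) v k = 0 -> (a <= b)%N ->
  ~~ (q n <= a < q n.+1)%N -> ~~ (q n <= b < q n.+1)%N ->
  interval_sum (block_restrict q v n) (a, b) = 0.
Proof.
move=> hz hab ha hb; rewrite /interval_sum /block_restrict /=.
have hqn := q_incr n.
have outside k :
    ~~ (q n <= k < q n.+1)%N -> (if (q n <= k < q n.+1)%N then v k else 0) = 0.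
  by move/negbTE => ->.
case: (ltnP b (q n)) => h1.
  by apply: big1_seq => k; rewrite mem_index_iota => hk; apply: outside; lia.
case: (leqP (q n.+1) a) => h2.
  by apply: big1_seq => k; rewrite mem_index_iota => hk; apply: outside; lia.
rewrite (@big_cat_nat _ _ _ (q n)) /=; [|lia|lia].
rewrite (@big_cat_nat _ _ _ (q n.+1) (q n)) /=; [|lia|lia].
rewrite big1_seq ?add0r; last by move=> k; rewrite mem_index_iota => hk; apply: outside; lia.
rewrite [X in _ + X]big1_seq ?addr0; last first.
  by move=> k; rewrite mem_index_iota => hk; apply: outside; lia.
by rewrite -[RHS]hz; apply: eq_big_seq => k; rewrite mem_index_iota => ->.
Qed.

(* An interval meets at most two blocks only partially, and the blocks it covers
   completely contribute nothing. *)
Lemma jsq_le_block_restrict f N Is : q 0%N = 0%N ->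
  (forall n, (n < N)%N -> \sum_(q n <= k < q n.+1) f k = 0) ->
  (forall k, (q N <= k)%N -> f k = 0) ->
  jsq f Is <= 2 * \sum_(n < N) jsq (block_restrict q f n) Is.
Proof.
move=> q0 hz hf; rewrite /jsq exchange_big /= mulr_sumr; apply: ler_sum => -[a b] _.
case: (leqP a b) => hab; last first.
  rewrite /interval_sum big_geq /=; last lia.
  by rewrite expr0n mulr_ge0 // sumr_ge0 // => n _; apply: sqr_ge0.
pose Pa n := (q n <= a < q n.+1)%N.
pose Pb n := ~~ Pa n && (q n <= b < q n.+1)%N.
set s := fun n => interval_sum (block_restrict q f n) (a, b).
have split_ends : interval_sum f (a, b) =
    \sum_(n < N) (if Pa n then s n else 0) + \sum_(n < N) (if Pb n then s n else 0).
  have -> : interval_sum f (a, b) = \sum_(n < N) s n.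
    rewrite /interval_sum exchange_big /=; apply: eq_bigr => k _.
    by rewrite block_sum_restrict //; case: ifP => // h; rewrite hf //; lia.
  rewrite -big_split /=; apply: eq_bigr => -[n hn] _ /=.
  rewrite /Pb; case: ifP => ha /=; first by rewrite addr0.
  case: ifP => hb; first by rewrite add0r.
  rewrite addr0; apply: interval_sum_restrict_outside => //;
    [exact: hz | exact: negbT ha | exact: negbT hb].
rewrite split_ends.
set A := \sum_(n < N) _; set B := \sum_(n < N) _.
have hA : A ^+ 2 <= \sum_(n < N) (if Pa n then s n ^+ 2 else 0).
  by apply: sqr_sum_if_le => n m; apply: block_unique.
have hB : B ^+ 2 <= \sum_(n < N) (if Pb n then s n ^+ 2 else 0).
  by apply: sqr_sum_if_le => n m /andP [_ h1] /andP [_ h2]; apply: block_unique h1 h2.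
have hAB : \sum_(n < N) (if Pa n then s n ^+ 2 else 0) +
           \sum_(n < N) (if Pb n then s n ^+ 2 else 0) <= \sum_(n < N) s n ^+ 2.
  rewrite -big_split /=; apply: ler_sum => n _; rewrite /Pb.
  case: (Pa n) => /=; first by rewrite addr0.
  by case: ifP; rewrite ?add0r // => _; apply: sqr_ge0.
have := sqr_ge0 (A - B); rewrite sqrrB sqrrD; lra.
Qed.

End Partition.

Definition block_index (q : nat -> nat) (k : nat) : nat :=
  count (fun n => (q n < k)%N) (iota 0 k).

Lemma block_index_mono q : {homo block_index q : m n / (m <= n)%N}.
Proof.
move=> m n hmn; rewrite /block_index (_ : iota 0 n = iota 0 m ++ iota m (n - m)).
  by rewrite count_cat (leq_trans _ (leq_addr _ _)) // sub_count // => i /=; lia.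
by rewrite -iotaD; congr iota; lia.
Qed.

Lemma block_index_q q : (forall n, (q n < q n.+1)%N) -> forall m, block_index q (q m) = m.
Proof.
move=> q_incr m; rewrite /block_index.
rewrite (_ : iota 0 (q m) = iota 0 m ++ iota m (q m - m)); last first.
  by rewrite -iotaD; congr iota; have := leq_self_q q_incr m; lia.
rewrite count_cat (eq_in_count (a2 := predT)); last first.
  by move=> i; rewrite mem_iota /= ltn_q //; lia.
rewrite count_predT size_iota (eq_in_count (a2 := pred0)) ?count_pred0 ?addn0 //.
by move=> i; rewrite mem_iota /= ltn_q // => h; apply/negbTE; lia.
Qed.

(* [lift_blocks q s] carries the value [s n] on the first point [q n] of the
   [n]-th block; it is the block-sum operator along [block_index q]. *)
Definition lift_blocks (q : nat -> nat) (s : nat -> R) : rseq R :=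
  block_sum (block_index q) s.

Section LiftBlocks.
Variable q : nat -> nat.
Hypothesis q_incr : forall n, (q n < q n.+1)%N.

Lemma block_restrict_lift s n k :
  block_restrict q (lift_blocks q s) n k =
  lift_blocks q (fun i => if i == n then s i else 0) k.
Proof.
have bi_mono := @block_index_mono q; have bi_q := block_index_q q_incr.
rewrite /block_restrict /lift_blocks /block_sum; case: ifP => hk.
  apply: eq_big_seq => i; rewrite mem_index_iota => /andP [h1 h2].
  case/andP: hk => /bi_mono hk1 /bi_mono hk2; rewrite !bi_q in hk1 hk2.
  by rewrite ifT //; apply/eqP; lia.
rewrite big1_seq // => i /andP [_]; rewrite mem_index_iota => /andP [h1 h2].
case: eqP => // ein; subst i; move/negbT: hk; rewrite negb_and -leqNgt -ltnNge.
by case/orP => /bi_mono; rewrite bi_q; lia.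
Qed.

Lemma sum_block_lift s n : \sum_(q n <= k < q n.+1) lift_blocks q s k = s n.
Proof.
rewrite sum_block_sum ?(ltnW (q_incr n)) //; last exact: block_index_mono.
by rewrite !block_index_q // big_nat1.
Qed.

Lemma jsq_restrict_lift s n Is : pairwise_disjoint Is ->
  jsq (block_restrict q (lift_blocks q s) n) Is <= s n ^+ 2.
Proof.
move=> hIs; rewrite (jsq_ext _ (block_restrict_lift s n)).
rewrite (jsq_block_sum (@block_index_mono q)).
apply: le_trans (jsq_le_l1 (K := n.+1) _ _) _.
- by move=> k hk; rewrite ifF //; apply/negbTE; rewrite neq_ltn; lia.
- exact: pairwise_disjoint_map (disjoint_union_blocks (@block_index_mono q)) hIs.
- rewrite big_nat_recr //= eqxx big1_seq ?add0r ?real_normK ?num_real //.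
  by move=> k /andP [_]; rewrite mem_index_iota => /andP [_ hk]; rewrite ltn_eqF ?normr0.
Qed.

Lemma lift_blocks_ge s N k : (forall n, (N <= n)%N -> s n = 0) -> (q N <= k)%N ->
  lift_blocks q s k = 0.
Proof.
move=> hs /(@block_index_mono q); rewrite block_index_q // => hk.
by apply: big1_seq => i /andP [_]; rewrite mem_index_iota => /andP [hi _]; apply: hs; lia.
Qed.

End LiftBlocks.

(** * Block sequences *)

Section BlockSequence.
Variables (x : nat -> rseq R) (q : nat -> nat).
Hypothesis q_incr : forall n, (q n < q n.+1)%N.
Hypothesis x_supp : forall n k, x n k != 0 -> (q n <= k < q n.+1)%N.

Lemma x_outside n k : ~~ (q n <= k < q n.+1)%N -> x n k = 0.
Proof. by move=> h; apply/eqP/negPn/negP => /x_supp; rewrite (negbTE h). Qed.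

Lemma lincomb_block b N n k : (n < N)%N -> (q n <= k < q n.+1)%N ->
  lincomb x b N k = b n * x n k.
Proof.
move=> hn hk; rewrite /lincomb (bigD1 (Ordinal hn)) //= big1 ?addr0 // => -[m hm] /= hmn.
rewrite x_outside ?mulr0 //; apply: contra hmn => /(block_unique q_incr hk) e.
by rewrite -val_eqE /= e.
Qed.

Lemma lincomb_ge b N k : (q N <= k)%N -> lincomb x b N k = 0.
Proof.
move=> hk; rewrite /lincomb big1 // => -[m hm] _ /=.
by rewrite x_outside ?mulr0 //; have := q_mono q_incr hm; lia.
Qed.

Lemma lincomb_stable b N N' k : (k < q N)%N -> (k < q N')%N ->
  lincomb x b N k = lincomb x b N' k.
Proof.
suff le M M' : (M <= M')%N -> (k < q M)%N -> lincomb x b M' k = lincomb x b M k.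
  move=> h1 h2; rewrite -(le N (maxn N N')) ?leq_maxl //.
  by rewrite (le N' (maxn N N')) ?leq_maxr.
move=> hM hk; rewrite /lincomb -!(big_mkord xpredT (fun n => b n * x n k)).
rewrite (@big_cat_nat _ _ _ M) //= [X in _ + X]big1_seq ?addr0 //.
move=> n /andP [_]; rewrite mem_index_iota => /andP [hn _].
by rewrite x_outside ?mulr0 //; have := q_mono q_incr hn; lia.
Qed.

Lemma in_J_lincomb b N : in_J (lincomb x b N).
Proof. by apply: finitely_supported_in_J; exists (q N) => k; apply: lincomb_ge. Qed.

Lemma interval_sum_x_other m n a b : (q n <= a)%N -> (b < q n.+1)%N -> m != n ->
  interval_sum (x m) (a, b) = 0.
Proof.
move=> ha hb hmn; apply: big1_seq => k /andP [_]; rewrite mem_index_iota /= => hk.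
apply: x_outside; apply: contra hmn => hkm.
by rewrite (block_unique q_incr hkm (_ : (q n <= k < q n.+1)%N)) //; lia.
Qed.

Definition block_total n : R := \sum_(q n <= k < q n.+1) x n k.

Definition weighted_totals (b : nat -> R) N : rseq R :=
  fun n => if (n < N)%N then block_total n * b n else 0.

Hypothesis q0 : q 0%N = 0%N.
Variable C2 : R.
Hypothesis x_bound : forall n Is, pairwise_disjoint Is -> jsq (x n) Is <= C2.

Lemma block_total_sqr_le n : block_total n ^+ 2 <= C2.
Proof.
have := x_bound n (pairwise_disjoint1 (I := (q n, (q n.+1).-1))).
by rewrite jsq_seq1 interval_sum_block.
Qed.

(* Split [sum b_n x_n] as [z + f]: [z] carries the block totals and [f] has zero
   sum on every block, so [f] is controlled by its pieces [b_n x_n - z|_n]. *)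
Lemma jsq_lincomb_le b N B Is :
  (forall Js, pairwise_disjoint Js -> jsq (weighted_totals b N) Js <= B) ->
  pairwise_disjoint Is ->
  jsq (lincomb x b N) Is <= 2 * B + 16 * C2 * \sum_(n < N) b n ^+ 2.
Proof.
move=> hB hIs.
set z := lift_blocks q (weighted_totals b N).
set f := fun k => lincomb x b N k - z k.
have f_block n : (n < N)%N -> \sum_(q n <= k < q n.+1) f k = 0.
  move=> hn; rewrite sumrB sum_block_lift // /weighted_totals hn.
  rewrite (eq_big_nat _ _ (F2 := fun k => b n * x n k)); last first.
    by move=> k hk; apply: lincomb_block.
  by rewrite -mulr_sumr mulrC subrr.
have f_ge k : (q N <= k)%N -> f k = 0.
  move=> hk; rewrite /f /z lincomb_ge // (lift_blocks_ge q_incr _ hk) ?subrr //.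
  by move=> n hn; rewrite /weighted_totals ltnNge hn.
have f_restrict n Js : (n < N)%N -> pairwise_disjoint Js ->
    jsq (block_restrict q f n) Js <= 4 * C2 * b n ^+ 2.
  move=> hn hJs.
  have ef k : block_restrict q f n k = b n * x n k + (-1) * block_restrict q z n k.
    rewrite /block_restrict /f; case: ifP => hk.
      by rewrite (lincomb_block _ hn hk) mulN1r.
    by rewrite x_outside ?hk // !mulr0 addr0.
  rewrite (jsq_ext _ ef); apply: le_trans (jsq_add _ _ _) _.
  rewrite !jsq_scale sqrrN expr1n mul1r.
  have := jsq_restrict_lift q_incr (weighted_totals b N) n hJs.
  rewrite /weighted_totals hn exprMn => hz.
  have := ler_wpM2r (sqr_ge0 (b n)) (block_total_sqr_le n).
  have := ler_wpM2l (sqr_ge0 (b n)) (x_bound n hJs); lra.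
have z_bound : jsq z Is <= B.
  rewrite (jsq_block_sum (@block_index_mono q)); apply: hB.
  exact: pairwise_disjoint_map (disjoint_union_blocks (@block_index_mono q)) hIs.
have ez k : lincomb x b N k = z k + f k by rewrite /f addrC subrK.
rewrite (jsq_ext _ ez); apply: le_trans (jsq_add _ _ _) _.
have := jsq_le_block_restrict q_incr Is q0 f_block f_ge.
have : \sum_(n < N) jsq (block_restrict q f n) Is <= \sum_(n < N) 4 * C2 * b n ^+ 2.
  by apply: ler_sum => -[n hn] _; apply: f_restrict.
rewrite -mulr_sumr; lra.
Qed.

End BlockSequence.

(** * Equivalence with the unit vector basis *)

Lemma lincomb_unitE (b : nat -> R) N k :
  lincomb (@unit_vec R) b N k = if (k < N)%N then b k else 0.
Proof.
rewrite /lincomb /unit_vec; case: ifP => hk.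
  rewrite (bigD1 (Ordinal hk)) //= eqxx mulr1 big1 ?addr0 // => -[n hn] /= hne.
  by rewrite ifF ?mulr0 //; apply: contraNF hne => /eqP e; rewrite -val_eqE /= e.
rewrite big1 // => -[n hn] _ /=; rewrite ifF ?mulr0 //.
by apply: contraFF hk => /eqP ->.
Qed.

Lemma bounded_count_eventually (P : pred nat) (B : R) :
  (forall N, (\sum_(n < N) (P n)%:R : R) <= B) ->
  exists N0, forall n, (N0 <= n)%N -> ~~ P n.
Proof.
move=> hB; apply: contrapT => /forallNP often.
have unbounded m : exists N, (m <= \sum_(n < N) P n)%N.
  elim: m => [|m [N hN]]; first by exists 0%N.
  have /existsNP [n /not_implyP [hn /negP/negPn hPn]] := often N.
  exists n.+1; rewrite big_ord_recr /= hPn addn1 ltnS (leq_trans hN) //.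
  rewrite -!(big_mkord xpredT (fun i => nat_of_bool (P i))).
  by rewrite (@big_cat_nat _ _ _ N 0 n) //= leq_addr.
have hB0 : 0 <= B by have := hB 0%N; rewrite big_ord0.
have [N hN] := unbounded (Num.Def.archi_bound B).
have := archi_boundP hB0; have := hB N; rewrite -natr_sum.
have : ((Num.Def.archi_bound B)%:R : R) <= (\sum_(n < N) P n)%:R by rewrite ler_nat.
lra.
Qed.

Lemma sum_le_jnorm_lincomb_unit (b : nat -> R) N :
  \sum_(n < N) b n <= jnorm (lincomb (@unit_vec R) b N).
Proof.
case: (posnP N) => [-> | hN]; first by rewrite big_ord0 jnorm_ge0.
have unitJ : in_J (lincomb (@unit_vec R) b N).
  by apply: finitely_supported_in_J; exists N => k hk; rewrite lincomb_unitE ltnNge hk.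
suff -> : \sum_(n < N) b n = interval_sum (lincomb (@unit_vec R) b N) (0, N.-1)%N.
  exact: le_trans (ler_norm _) (interval_sum_le_jnorm _ unitJ).
rewrite /interval_sum /= prednK // big_mkord.
by apply: eq_bigr => -[n hn] _; rewrite lincomb_unitE /= hn.
Qed.

Section EquivalentToUnitVectors.
Variables (x : nat -> rseq R) (q : nat -> nat).
Hypothesis q_incr : forall n, (q n < q n.+1)%N.
Hypothesis q0 : q 0%N = 0%N.
Hypothesis x_supp : forall n k, x n k != 0 -> (q n <= k < q n.+1)%N.
Variable C2 : R.
Hypothesis x_bound : forall n Is, pairwise_disjoint Is -> jsq (x n) Is <= C2.
Variable c : R.
Hypothesis c_gt0 : 0 < c.
Hypothesis lower_estimate :
  forall a N, c * jnorm (lincomb (@unit_vec R) a N) <= jnorm (lincomb x a N).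

Let small n := `|block_total x q n| < c / 2.

(* Test the lower estimate on the indicator [b] of the small blocks: the
   decomposition bounds [||sum b_n x_n||^2] by [c^2 M^2 / 2 + 16 C2 M], where
   [M] is the number of small blocks, while [||sum b_n e_n|| >= M]. *)
Lemma count_small_totals_le N : (\sum_(n < N) (small n)%:R) * c ^+ 2 <= 32 * C2.
Proof.
pose b n : R := (small n)%:R.
set M := \sum_(n < N) _.
have b01 n : b n ^+ 2 = b n by rewrite /b; case: (small n); rewrite ?expr1n ?expr0n.
have M0 : 0 <= M by apply: sumr_ge0 => n _; rewrite ler0n.
have totals_bound Is : pairwise_disjoint Is ->
    jsq (weighted_totals x q b N) Is <= (c / 2 * M) ^+ 2.
  move=> hIs; apply: le_trans (jsq_le_l1 (K := N) _ hIs) _.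
    by move=> k hk; rewrite /weighted_totals ltnNge hk.
  rewrite ler_sqr ?nnegrE ?sumr_ge0 ?mulr_ge0 ?divr_ge0 ?invr_ge0 ?(ltW c_gt0) //.
  rewrite /M mulr_sumr big_mkord; apply: ler_sum => -[n hn] _ /=.
  rewrite /weighted_totals hn /b; case: (boolP (small n)) => h /=.
    by rewrite !mulr1 ltW.
  by rewrite !mulr0 normr0.
have upper : jnorm (lincomb x b N) ^+ 2 <= 2 * (c / 2 * M) ^+ 2 + 16 * C2 * M.
  have eM : \sum_(n < N) b n ^+ 2 = M by apply: eq_bigr => n _; rewrite b01.
  apply: jnorm_sqr_le => Js hJs.
  by have := jsq_lincomb_le q_incr x_supp q0 x_bound totals_bound hJs; rewrite eM.
have lower : c ^+ 2 * M ^+ 2 <= jnorm (lincomb x b N) ^+ 2.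
  rewrite -exprMn ler_sqr ?nnegrE ?mulr_ge0 ?jnorm_ge0 ?(ltW c_gt0) //.
  apply: le_trans (lower_estimate b N).
  exact: (ler_wpM2l (ltW c_gt0) (sum_le_jnorm_lincomb_unit b N)).
have e : (c / 2 * M) ^+ 2 = c ^+ 2 * M ^+ 2 / 4 by field.
have key : c ^+ 2 * M ^+ 2 <= 32 * C2 * M by move: upper; rewrite e; lra.
have [-> | M_neq0] := eqVneq M 0; first by rewrite mul0r mulr_ge0 // (jsq_bound_ge0 (x_bound 0)).
have M_gt0 : 0 < M by rewrite lt_def M_neq0.
by rewrite mulrC -(ler_pM2r M_gt0); move: key; rewrite expr2; lra.
Qed.

Lemma eventually_large_totals :
  exists N0, forall n, (N0 <= n)%N -> c / 2 <= `|block_total x q n|.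
Proof.
have [|N0 hN0] := @bounded_count_eventually small (32 * C2 / c ^+ 2).
  by move=> N; rewrite ler_pdivlMr ?exprn_gt0 // count_small_totals_le.
by exists N0 => n /hN0; rewrite /small -leNgt.
Qed.

End EquivalentToUnitVectors.

Lemma sum_if_ltn_le (f : nat -> R) N N0 : (forall n, 0 <= f n) ->
  \sum_(n < N) (if (n < N0)%N then f n else 0) <= \sum_(n < N0) f n.
Proof.
move=> f0; rewrite -(big_mkord xpredT f).
rewrite -(big_mkord xpredT (fun n => if (n < N0)%N then f n else 0)).
apply: le_trans (_ : _ <= \sum_(0 <= n < maxn N N0) (if (n < N0)%N then f n else 0)) _.
  rewrite [X in _ <= X](@big_cat_nat _ _ _ N) ?leq_maxl //= lerDl.
  by apply: sumr_ge0 => n _; case: ifP.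
rewrite (@big_cat_nat _ _ _ N0) ?leq_maxr //= [X in _ + X]big1_seq ?addr0.
  by apply: ler_sum_nat => n /andP [_ hn]; rewrite hn.
by move=> n /andP [_]; rewrite mem_index_iota => /andP [hn _]; rewrite ltnNge hn.
Qed.

Lemma bounded_linear_fix_closed_span (x : nat -> rseq R) (P : rseq R -> rseq R)
    (M : R) :
  (forall (al be : R) y z,
    P (fun k => al * y k + be * z k) = (fun k => al * P y k + be * P z k)) ->
  (forall y, in_J y -> in_J (P y)) ->
  (forall y, in_J y -> jnorm (P y) <= M * jnorm y) ->
  (forall b N, P (lincomb x b N) = lincomb x b N) ->
  (forall b N, in_J (lincomb x b N)) ->
  forall y, closed_span x y -> P y = y.
Proof.
move=> P_lin PJ P_bound P_fix xJ y [yJ y_approx]; apply: funext => k.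
have pointwise v : in_J v -> `|v k| <= jnorm v.
  by move=> vJ; rewrite -interval_sum_seq1; exact: interval_sum_le_jnorm.
set A := `|M| + 1; have A_gt0 : 0 < A by rewrite ltr_wpDl.
apply/eqP; rewrite -subr_eq0 -normr_le0; apply/ler_addgt0Pr => e e_gt0; rewrite add0r.
have [b [N approx]] := y_approx (e / A) (divr_gt0 e_gt0 A_gt0).
set L := lincomb x b N in approx; set r := fun i => y i - L i in approx.
have rJ : in_J r.
  apply: in_J_ext (in_J_lin 1 (-1) yJ (xJ b N)) => i.
  by rewrite /r mul1r mulN1r.
have -> : P y k - y k = P r k - r k.
  have yE : y = (fun i => 1 * r i + 1 * L i) by apply: funext => i; rewrite /r !mul1r subrK.
  by rewrite {1}yE P_lin P_fix /r /L /=; ring.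
apply: le_trans (ler_normB _ _) _.
have : `|P r k| <= `|M| * jnorm r.
  apply: le_trans (pointwise _ (PJ _ rJ)) (le_trans (P_bound _ rJ) _).
  by rewrite ler_wpM2r ?jnorm_ge0 ?ler_norm.
have : A * jnorm r <= e by rewrite mulrC -ler_pdivlMr // ltW.
have := pointwise _ rJ; rewrite /A; lra.
Qed.

(** * The projection onto the closed span *)

Section Projection.
Variables (x : nat -> rseq R) (q j : nat -> nat).
Hypothesis q_incr : forall n, (q n < q n.+1)%N.
Hypothesis q0 : q 0%N = 0%N.
Hypothesis x_supp : forall n k, x n k != 0 -> (q n <= k < q n.+1)%N.
Variable C2 : R.
Hypothesis x_bound : forall n Is, pairwise_disjoint Is -> jsq (x n) Is <= C2.
Hypothesis j_block : forall n, (q n <= j n < q n.+1)%N.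
Hypothesis x_partial_neq0 : forall n, interval_sum (x n) (q n, j n) != 0.
Variables (N0 : nat) (d : R).
Hypothesis d_gt0 : 0 < d.
Hypothesis j_last : forall n, (N0 <= n)%N -> j n = (q n.+1).-1.
Hypothesis large_totals : forall n, (N0 <= n)%N -> d <= `|block_total x q n|.

Definition block_coef y n : R := interval_sum y (q n, j n) / interval_sum (x n) (q n, j n).

(* Only [x_0, ..., x_k] can be nonzero at [k], as [x_n] lives beyond [q n >= n]. *)
Definition block_proj y : rseq R := fun k => lincomb x (block_coef y) k.+1 k.

Let chi n := interval_sum (x n) (q n, j n).
Let K1 := \sum_(n < N0) (`|block_total x q n / chi n| + 1).
Let K2 := \sum_(n < N0) 1 / chi n ^+ 2.

Lemma block_total_neq0 n : (N0 <= n)%N -> block_total x q n != 0.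
Proof. by move=> hn; rewrite -normr_gt0 (lt_le_trans d_gt0) ?large_totals. Qed.

Lemma block_coef_large y n : (N0 <= n)%N ->
  block_coef y n = (\sum_(q n <= k < q n.+1) y k) / block_total x q n.
Proof. by move=> hn; rewrite /block_coef j_last // !interval_sum_block. Qed.

(* Beyond [N0] the weighted totals are the block sums of [y]; the first [N0]
   are corrected by hand. *)
Lemma jsq_weighted_coef_le y N Js : in_J y -> pairwise_disjoint Js ->
  jsq (weighted_totals x q (block_coef y) N) Js <=
  2 * jnorm y ^+ 2 + 2 * (K1 * jnorm y) ^+ 2.
Proof.
move=> yJ hJs; set Y := jnorm y; have Y0 : 0 <= Y := jnorm_ge0 y.
set v := weighted_totals _ _ _ _.
set w := block_sum (fun m => q (minn m N)) y.
have w_mono : {homo (fun m => q (minn m N)) : m n / (m <= n)%N}.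
  move=> m n hmn; apply: q_mono => //.
  by rewrite leq_min geq_minr (leq_trans (geq_minl _ _) hmn).
have wE n : w n = if (n < N)%N then \sum_(q n <= k < q n.+1) y k else 0.
  rewrite /w /block_sum; case: ifP => hn.
    by rewrite (minn_idPl (ltnW hn)) (minn_idPl hn).
  have e1 : minn n N = N by apply/minn_idPr; lia.
  have e2 : minn n.+1 N = N by apply/minn_idPr; lia.
  by rewrite e1 e2 big_geq.
set corr := fun n => v n - w n.
have corr_large n : (N0 <= n)%N -> corr n = 0.
  move=> hn; rewrite /corr /v /weighted_totals wE; case: ifP => _; last by rewrite subrr.
  by rewrite block_coef_large // mulrC divfK ?subrr ?block_total_neq0.
have corr_le n : `|corr n| <= (`|block_total x q n / chi n| + 1) * Y.
  rewrite /corr /v /weighted_totals wE mulrDl mul1r.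
  apply: le_trans (ler_normB _ _) _; apply: lerD; case: ifP => _;
    rewrite ?normr0 ?mulr_ge0 //.
    rewrite /block_coef mulrA mulrAC normrM ler_wpM2l //.
    exact: interval_sum_le_jnorm.
  by rewrite -(interval_sum_block q_incr); exact: interval_sum_le_jnorm.
have ev k : v k = w k + corr k by rewrite /corr addrC subrK.
rewrite (jsq_ext _ ev); apply: le_trans (jsq_add _ _ _) _.
set S := \sum_(0 <= k < N0) `|corr k|.
have S0 : 0 <= S by apply: sumr_ge0 => k _.
have S_le : S <= K1 * Y.
  by rewrite /S /K1 mulr_suml big_mkord; apply: ler_sum => k _; exact: corr_le.
have : jsq corr Js <= S ^+ 2 by apply: jsq_le_l1.
have : S ^+ 2 <= (K1 * Y) ^+ 2 by rewrite ler_sqr ?nnegrE // (le_trans S0 S_le).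
have : jsq w Js <= Y ^+ 2 := jsq_block_sum_le w_mono yJ hJs.
lra.
Qed.

Lemma sum_block_coef_sqr_le y N : in_J y ->
  \sum_(n < N) block_coef y n ^+ 2 <= jnorm y ^+ 2 / d ^+ 2 + K2 * jnorm y ^+ 2.
Proof.
move=> yJ; set Y := jnorm y; set W := fun n => \sum_(q n <= k < q n.+1) y k.
have d2_gt0 : 0 < d ^+ 2 by apply: exprn_gt0.
have W_le : \sum_(n < N) W n ^+ 2 <= Y ^+ 2.
  have := jsq_le_jnorm yJ (pairwise_disjoint_blocks q_incr (N := N)).
  rewrite /jsq big_map; apply: le_trans.
  rewrite -(big_mkord xpredT (fun n => W n ^+ 2)) /index_iota subn0.
  by apply: ler_sum => n _; rewrite interval_sum_block.
have coef_le n : block_coef y n ^+ 2 <=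
    W n ^+ 2 / d ^+ 2 + (if (n < N0)%N then Y ^+ 2 * (1 / chi n ^+ 2) else 0).
  have W0 : 0 <= W n ^+ 2 / d ^+ 2 by rewrite divr_ge0 ?sqr_ge0 ?ltW.
  case: (ltnP n N0) => hn.
    suff : block_coef y n ^+ 2 <= Y ^+ 2 * (1 / chi n ^+ 2) by lra.
    rewrite /block_coef expr_div_n mul1r ler_wpM2r ?invr_ge0 ?sqr_ge0 //.
    exact: interval_sum_sqr_le_jnorm.
  have total_ge : d ^+ 2 <= block_total x q n ^+ 2.
    rewrite -[block_total x q n ^+ 2]real_normK ?num_real //.
    by rewrite ler_sqr ?nnegrE ?normr_ge0 ?(ltW d_gt0) // large_totals.
  rewrite addr0 block_coef_large // !expr_div_n ler_wpM2l ?sqr_ge0 //.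
  by rewrite lef_pV2 ?posrE // (lt_le_trans d2_gt0 total_ge).
apply: le_trans (_ : _ <= \sum_(n < N) (W n ^+ 2 / d ^+ 2 +
    (if (n < N0)%N then Y ^+ 2 * (1 / chi n ^+ 2) else 0))) _.
  by apply: ler_sum => n _; exact: coef_le.
rewrite big_split /= lerD //.
  by rewrite -mulr_suml ler_wpM2r // invr_ge0 ltW.
rewrite /K2 mulr_suml; under [X in _ <= X]eq_bigr do rewrite mulrC.
apply: (sum_if_ltn_le (f := fun n => Y ^+ 2 * (1 / chi n ^+ 2))) => n.
by rewrite mulr_ge0 ?sqr_ge0 // mul1r invr_ge0 sqr_ge0.
Qed.

Let proj_const : R := 4 + 4 * K1 ^+ 2 + 16 * C2 * (1 / d ^+ 2 + K2).

Let C2_ge0 : 0 <= C2 := jsq_bound_ge0 (x_bound 0).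

Lemma jsq_lincomb_coef_le y N Is : in_J y -> pairwise_disjoint Is ->
  jsq (lincomb x (block_coef y) N) Is <= proj_const * jnorm y ^+ 2.
Proof.
move=> yJ hIs.
have := jsq_lincomb_le q_incr x_supp q0 x_bound (fun Js => @jsq_weighted_coef_le y N Js yJ) hIs.
have C2_16 : 0 <= 16 * C2 by rewrite mulr_ge0 ?C2_ge0.
have := ler_wpM2l C2_16 (sum_block_coef_sqr_le N yJ).
rewrite /proj_const exprMn; lra.
Qed.

Lemma block_proj_lincomb_coef y N k : (k < q N)%N ->
  block_proj y k = lincomb x (block_coef y) N k.
Proof.
move=> hk; apply: (lincomb_stable q_incr x_supp _ _ hk).
exact: leq_trans (leq_self_q q_incr k.+1).
Qed.

Lemma jsq_block_proj_le y Is : in_J y -> pairwise_disjoint Is ->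
  jsq (block_proj y) Is <= proj_const * jnorm y ^+ 2.
Proof.
move=> yJ hIs; set N := (\max_(I <- Is) I.2).+1.
suff -> : jsq (block_proj y) Is = jsq (lincomb x (block_coef y) N) Is.
  exact: jsq_lincomb_coef_le.
rewrite /jsq !big_seq; apply: eq_bigr => I hI; congr (_ ^+ 2).
apply: eq_big_nat => k /andP [_ hk]; apply: block_proj_lincomb_coef.
have I_lt : (I.2 < N)%N.
  by rewrite ltnS; exact: (leq_bigmax_seq (F := fun J : nat * nat => J.2)).
by rewrite ltnS in hk; exact: leq_ltn_trans hk (leq_trans I_lt (leq_self_q q_incr N)).
Qed.

Lemma in_J_block_proj y : in_J y -> in_J (block_proj y).
Proof. by move=> yJ; exists (proj_const * jnorm y ^+ 2) => Is; apply: jsq_block_proj_le. Qed.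

Lemma block_proj_bounded : exists M, forall y, in_J y -> jnorm (block_proj y) <= M * jnorm y.
Proof.
have const_ge0 : 0 <= proj_const.
  have K2_ge0 : 0 <= K2 by apply: sumr_ge0 => n _; rewrite divr_ge0 ?sqr_ge0.
  have d2_ge0 : 0 <= 1 / d ^+ 2 by rewrite divr_ge0 ?sqr_ge0.
  have := mulr_ge0 C2_ge0 (addr_ge0 d2_ge0 K2_ge0); have := sqr_ge0 K1.
  rewrite /proj_const; lra.
exists (Num.sqrt proj_const) => y yJ; apply: jnorm_le => [|Is hIs].
  by rewrite mulr_ge0 ?sqrtr_ge0 ?jnorm_ge0.
by rewrite exprMn sqr_sqrtr //; exact: jsq_block_proj_le.
Qed.

Lemma block_proj_linear (al be : R) y z :
  block_proj (fun k => al * y k + be * z k) =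
  (fun k => al * block_proj y k + be * block_proj z k).
Proof.
apply: funext => k; rewrite /block_proj /lincomb !mulr_sumr -big_split /=.
by apply: eq_bigr => n _; rewrite /block_coef interval_sumD; ring.
Qed.

Lemma block_coef_lincomb b N n :
  block_coef (lincomb x b N) n = if (n < N)%N then b n else 0.
Proof.
have other m : m != n -> interval_sum (x m) (q n, j n) = 0.
  move=> hmn; case/andP: (j_block n) => _ hj.
  exact: (interval_sum_x_other q_incr x_supp (leqnn _) hj hmn).
rewrite /block_coef.
have -> : interval_sum (lincomb x b N) (q n, j n) =
    \sum_(m < N) b m * interval_sum (x m) (q n, j n).
  by rewrite /interval_sum /lincomb exchange_big /=; apply: eq_bigr => m _; rewrite mulr_sumr.
case: ifP => hn.
  rewrite (bigD1 (Ordinal hn)) //= big1 ?addr0 ?(mulfK (x_partial_neq0 n)) //.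
  move=> -[m hm] /= hmn.
  by rewrite other ?mulr0 //; apply: contraNneq hmn => e; rewrite -val_eqE /= e.
rewrite big1 ?mul0r // => -[m hm] _ /=.
by rewrite other ?mulr0 //; apply: contraFneq hn => <-.
Qed.

Lemma block_proj_lincomb b N : block_proj (lincomb x b N) = lincomb x b N.
Proof.
apply: funext => k; set M := maxn N k.+1.
have k_lt : (k < q M)%N.
  exact: leq_trans (leq_self_q q_incr k.+1) (q_mono q_incr (leq_maxr N k.+1)).
rewrite (block_proj_lincomb_coef _ k_lt) /lincomb.
rewrite -(big_mkord xpredT (fun n => block_coef (lincomb x b N) n * x n k)).
rewrite -(big_mkord xpredT (fun n => b n * x n k)).
rewrite (@big_cat_nat _ _ _ N) ?leq_maxl //= [X in _ + X]big1_seq ?addr0.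
  by apply: eq_big_nat => n /andP [_ hn]; rewrite block_coef_lincomb hn.
move=> n /andP [_]; rewrite mem_index_iota => /andP [hn _].
by rewrite block_coef_lincomb ltnNge hn mul0r.
Qed.

Lemma block_proj_closed_span y : in_J y -> closed_span x (block_proj y).
Proof.
move=> yJ; split=> [|eps eps_gt0]; first exact: in_J_block_proj.
have eps2_gt0 : 0 < (eps / 2) ^+ 2 by rewrite exprn_gt0 // divr_gt0.
have [K hK] := jsq_tail_small (in_J_block_proj yJ) eps2_gt0.
exists (block_coef y), K.
apply: le_lt_trans (_ : _ <= eps / 2) _; last by rewrite ltr_pdivrMr // ltr_pMr // ltr1n.
apply: jnorm_le => [|Is hIs]; first by rewrite ltW // divr_gt0.
rewrite (jsq_ext (v := tail (q K) (block_proj y))).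
  exact: hK (leq_self_q q_incr K) _ hIs.
move=> k; rewrite /tail; case: ifP => hk; first by rewrite (lincomb_ge q_incr x_supp) // subr0.
by rewrite (@block_proj_lincomb_coef _ K) ?subrr // ltnNge hk.
Qed.

Theorem block_proj_complemented : complemented_in_J (closed_span x).
Proof.
have [M P_bound] := block_proj_bounded.
exists block_proj; split; first exact: in_J_block_proj.
split; first by move=> al be y z _ _; exact: block_proj_linear.
split; first by exists M.
split; first exact: block_proj_closed_span.
apply: (bounded_linear_fix_closed_span block_proj_linear in_J_block_proj P_bound
  block_proj_lincomb) => b N.
exact: (in_J_lincomb q_incr x_supp).
Qed.

End Projection.

Lemma block_sequence_partition (x : nat -> rseq R) : block_sequence x ->
  exists q : nat -> nat, [/\ q 0%N = 0%N, forall n, (q n < q n.+1)%N &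
    forall n k, x n k != 0 -> (q n <= k < q n.+1)%N].
Proof.
move=> [_ [x_nz x_ord]].
pose p n := ex_minn (x_nz n).
have p_nz n : x n (p n) != 0 by rewrite /p; case: ex_minnP.
have p_min n k : x n k != 0 -> (p n <= k)%N by rewrite /p; case: ex_minnP => m _; apply.
exists (fun n => if n is n'.+1 then p n'.+1 else 0%N); split => //.
  case=> [|n]; last exact: x_ord _ _ _ (p_nz _) (p_nz _).
  exact: leq_ltn_trans (leq0n _) (x_ord _ _ _ (p_nz 0%N) (p_nz 1%N)).
by case=> [|n] k h; rewrite (x_ord _ _ _ h (p_nz _)) ?p_min.
Qed.

Lemma upper_estimate_jsq_le (x : nat -> rseq R) (C : R) : 0 <= C ->
  (forall n, finitely_supported (x n)) ->
  (forall a N, jnorm (lincomb x a N) <= C * jnorm (lincomb (@unit_vec R) a N)) ->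
  forall n Is, pairwise_disjoint Is -> jsq (x n) Is <= C ^+ 2.
Proof.
move=> C_ge0 x_fin upper n Is hIs.
pose a m : R := if m == n then 1 else 0.
have single (y : nat -> rseq R) : lincomb y a n.+1 = y n.
  apply: funext => k; rewrite /lincomb big_ord_recr /= /a eqxx mul1r big1 ?add0r //.
  by move=> [m hm] _ /=; rewrite ifF ?mul0r // ltn_eqF.
have unit_le1 : jnorm (@unit_vec R n) <= 1.
  apply: jnorm_le => // Js hJs; apply: le_trans (jsq_le_l1 (K := n.+1) _ hJs) _.
    by move=> k hk; rewrite /unit_vec ifF //; apply/negbTE; rewrite neq_ltn hk orbT.
  rewrite big_nat_recr //= big1_seq ?add0r /unit_vec ?eqxx ?normr1 ?expr1n //.
  by move=> k /andP [_]; rewrite mem_index_iota => /andP [_ hk]; rewrite ltn_eqF ?normr0.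
have x_le : jnorm (x n) <= C.
  have := upper a n.+1; rewrite !single => /le_trans; apply.
  by rewrite -[X in _ <= X]mulr1 ler_wpM2l.
apply: le_trans (jsq_le_jnorm (finitely_supported_in_J (x_fin n)) hIs) _.
by rewrite ler_sqr ?nnegrE ?jnorm_ge0.
Qed.

Lemma interval_sum_first_nonzero (v : rseq R) a :
  (exists k, v k != 0) -> (forall k, v k != 0 -> (a <= k)%N) ->
  exists2 p, v p != 0 & interval_sum v (a, p) = v p.
Proof.
move=> v_nz v_ge; exists (ex_minn v_nz); first by case: ex_minnP.
case: ex_minnP => p hp p_min; have a_le := v_ge _ hp.
rewrite /interval_sum /= big_nat_recr //= big1_seq ?add0r // => k.
rewrite mem_index_iota => /andP [_ /andP [_ hk]]; apply/eqP; apply: contraTT hk.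
by rewrite -leqNgt; exact: p_min.
Qed.

Lemma exists_coordinate_ends (x : nat -> rseq R) (q : nat -> nat) N0 :
  (forall n, (q n < q n.+1)%N) -> (forall n, exists k, x n k != 0) ->
  (forall n k, x n k != 0 -> (q n <= k < q n.+1)%N) ->
  (forall n, (N0 <= n)%N -> block_total x q n != 0) ->
  exists j : nat -> nat, [/\ forall n, (q n <= j n < q n.+1)%N,
    forall n, interval_sum (x n) (q n, j n) != 0 &
    forall n, (N0 <= n)%N -> j n = (q n.+1).-1].
Proof.
move=> q_incr x_nz x_supp totals_nz.
have end_n n : exists jn, [/\ (q n <= jn < q n.+1)%N,
    interval_sum (x n) (q n, jn) != 0 & (N0 <= n)%N -> jn = (q n.+1).-1].
  case: (leqP N0 n) => hn.
    exists (q n.+1).-1; split=> //; last by rewrite interval_sum_block ?totals_nz.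
    by have := q_incr n; lia.
  have [|p p_nz p_sum] := interval_sum_first_nonzero (x_nz n) (a := q n).
    by move=> k /x_supp /andP [].
  by exists p; split; rewrite ?p_sum ?x_supp // => ?; lia.
have [j hj] := choice end_n.
by exists j; split=> n; case: (hj n).
Qed.

End JamesSpace.

Theorem mainTheorem14 (R : realType) (x : nat -> rseq R) :
  block_sequence x ->
  equivalent_seqs x (@unit_vec R) ->
  complemented_in_J (closed_span x).
Proof.
move=> x_block [c [C [c_gt0 [C_gt0 equiv]]]].
have [q [q0 q_incr x_supp]] := block_sequence_partition x_block.
have x_bound := upper_estimate_jsq_le (ltW C_gt0) x_block.1 (fun a N => (equiv a N).2).
have [N0 large] :=
  eventually_large_totals q_incr q0 x_supp x_bound c_gt0 (fun a N => (equiv a N).1).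
have d_gt0 : 0 < c / 2 by rewrite divr_gt0.
have totals_nz n : (N0 <= n)%N -> block_total x q n != 0.
  by move=> hn; rewrite -normr_gt0 (lt_le_trans d_gt0) ?large.
have [j [j_block x_partial j_last]] :=
  exists_coordinate_ends q_incr x_block.2.1 x_supp totals_nz.
exact: (block_proj_complemented q_incr q0 x_supp x_bound j_block x_partial
  d_gt0 j_last large).
Qed.
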